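(* Let $\mathbb{S}$ be a commutative semigroup with unit $0$ and let $T=\{T_s\}_{s\in\mathbb{S}}$ be a CP-semigroup on $\mathcal{B}(H)$. Define linear maps $\widetilde{T}_s$ on $\mathcal{B}(H\oplus\mathbb{C})$ by $\widetilde{T}_0=\mathrm{id}$ and, for $s\neq 0$, $$\widetilde{T}_s\begin{pmatrix} A & h\\ g^* & c\end{pmatrix}=\begin{pmatrix} T_s(A)+c(I-T_s(I)) & 0\\ 0 & c\end{pmatrix},$$ where $A\in\mathcal{B}(H)$, $h,g\in H$, $c\in\mathbb{C}$. Then $\widetilde{T}=\{\widetilde{T}_s\}_{s\in\mathbb{S}}$ is a semigroup of unital completely positive maps, and for all $b\in\mathcal{B}(H)$ and $s\in\mathbb{S}$, $T_s(b)=p_H\widetilde{T}_s(b)p_H$, where $\mathcal{B}(H)$ is identified with the corner $p_H\mathcal{B}(H\oplus\mathbb{C})p_H$ and $p_H$ is the projection onto $H\oplus 0$.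
   Context: A CP-semigroup over $\mathbb{S}$ on a von Neumann algebra $\mathcal{A}$ is a family $T=\{T_s\}_{s\in\mathbb{S}}$ of normal contractive completely positive maps on $\mathcal{A}$ with $T_0=\mathrm{id}_{\mathcal{A}}$ and $T_s\circ T_t=T_{s+t}$ for all $s,t\in\mathbb{S}$. *)

From HB Require Import structures.
From mathcomp Require Import all_boot all_order all_algebra.
From mathcomp Require Import complex.
From mathcomp Require Import reals.
Set Implicit Arguments. Unset Strict Implicit. Unset Printing Implicit Defensive.
Import Order.TTheory GRing.Theory Num.Theory.
Local Open Scope ring_scope.

Section Hilbert.
Variable R : realType.
Local Notation C := (R[i]).
Variable V : lmodType C.
Variable ip : V -> V -> C.

Definition is_inner_product : Prop :=
  [/\ (forall (a : C) (x y z : V), ip (a *: x + y) z = a * ip x z + ip y z),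
      (forall x y : V, ip y x = Num.conj (ip x y)),
      (forall x : V, 0 <= ip x x) &
      (forall x : V, ip x x = 0 -> x = 0)].

Definition vnorm (x : V) : R := Num.sqrt (complex.Re (ip x x)).

Definition complete_ip : Prop :=
  forall u : nat -> V,
    (forall e : R, 0 < e -> exists N : nat, forall m n : nat,
        (N <= m)%N -> (N <= n)%N -> vnorm (u m - u n) < e) ->
    exists l : V, forall e : R, 0 < e -> exists N : nat, forall n : nat,
        (N <= n)%N -> vnorm (u n - l) < e.

Definition is_hilbert : Prop := is_inner_product /\ complete_ip.

(* bounded linear operators; B(H) = { A : V -> V | is_bop A } *)
Definition op_bounded_by (A : V -> V) (M : R) : Prop :=
  forall x : V, vnorm (A x) <= M * vnorm x.

Definition is_bop (A : V -> V) : Prop :=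
  (forall (a : C) (x y : V), A (a *: x + y) = a *: A x + A y) /\
  exists M : R, op_bounded_by A M.

Definition pos_op (A : V -> V) : Prop := forall x : V, 0 <= ip (A x) x.

Definition pos_opmx (n : nat) (X : 'I_n -> 'I_n -> V -> V) : Prop :=
  forall x : 'I_n -> V, 0 <= \sum_(i < n) \sum_(j < n) ip (X i j (x j)) (x i).

Definition le_op (A B : V -> V) : Prop := pos_op (fun x => B x - A x).

Definition self_adjoint (A : V -> V) : Prop :=
  forall x y : V, ip (A x) y = ip x (A y).

Definition is_lub_op (I : Type) (F : I -> V -> V) (A : V -> V) : Prop :=
  [/\ is_bop A, self_adjoint A, (forall i, le_op (F i) A) &
      (forall B : V -> V, is_bop B -> self_adjoint B ->
         (forall i, le_op (F i) B) -> le_op A B)].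

Definition bop_map (Phi : (V -> V) -> (V -> V)) : Prop :=
  (forall A, is_bop A -> is_bop (Phi A)) /\
  (forall (a : C) (A B : V -> V), is_bop A -> is_bop B ->
     Phi (fun x => a *: A x + B x) = (fun x => a *: Phi A x + Phi B x)).

Definition completely_positive (Phi : (V -> V) -> (V -> V)) : Prop :=
  bop_map Phi /\
  forall (n : nat) (X : 'I_n -> 'I_n -> V -> V),
    (forall i j, is_bop (X i j)) -> pos_opmx X ->
    pos_opmx (fun i j => Phi (X i j)).

Definition contractive (Phi : (V -> V) -> (V -> V)) : Prop :=
  forall (A : V -> V) (M : R), is_bop A -> 0 <= M -> op_bounded_by A M ->
    op_bounded_by (Phi A) M.

Definition normal_map (Phi : (V -> V) -> (V -> V)) : Prop :=
  forall (I : Type) (leI : I -> I -> Prop) (F : I -> V -> V) (A : V -> V),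
    inhabited I ->
    (forall i j, exists k, leI i k /\ leI j k) ->
    (forall i j, leI i j -> le_op (F i) (F j)) ->
    (forall i, is_bop (F i) /\ pos_op (F i)) ->
    is_lub_op F A ->
    is_lub_op (fun i => Phi (F i)) (Phi A).

Definition unital (Phi : (V -> V) -> (V -> V)) : Prop := Phi id = id.

End Hilbert.

Definition cp_semigroup (R : realType) (V : lmodType R[i]) (ip : V -> V -> R[i])
  (S : nmodType) (T : S -> (V -> V) -> (V -> V)) : Prop :=
  [/\ (forall s, normal_map ip (T s)),
      (forall s, contractive ip (T s)),
      (forall s, completely_positive ip (T s)),
      (forall A, is_bop ip A -> T 0 A = A) &
      (forall s t A, is_bop ip A -> T (s + t) A = T s (T t A))].

Definition sumC (R : realType) (V : lmodType R[i]) : lmodType R[i] :=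
  (V * (R[i])^o)%type.

Definition ip_sumC (R : realType) (V : lmodType R[i]) (ip : V -> V -> R[i])
  (w z : sumC V) : R[i] := ip w.1 z.1 + (w.2 : R[i]) * Num.conj (z.2 : R[i]).

(* the dilation \tilde T_s on B(H (+) C):
   X = [[A, h],[g^*, c]] with A = p_H X p_H, c = <X(0,1),(0,1)> *)
Definition Ttilde (R : realType) (V : lmodType R[i]) (S : nmodType)
  (T : S -> (V -> V) -> (V -> V)) (s : S) (X : sumC V -> sumC V) : sumC V -> sumC V :=
  if s == 0 then X else
  let A := fun x : V => (X (x, 0)).1 in
  let c : R[i] := (X (0, 1)).2 in
  fun w => (T s A w.1 + c *: (w.1 - T s id w.1), (c * (w.2 : R[i]) : (R[i])^o)).

(* p_H Y p_H, viewed as an operator on H *)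
Definition compress (R : realType) (V : lmodType R[i]) (Y : sumC V -> sumC V) : V -> V :=
  fun x => (Y (x, 0)).1.

From HB Require Import structures.
From mathcomp Require Import all_boot all_order all_algebra.
From mathcomp Require Import complex reals spectral sesquilinear ring.
From mathcomp Require Import boolp.
Import Order.TTheory GRing.Theory Num.Theory.
Set Implicit Arguments. Unset Strict Implicit. Unset Printing Implicit Defensive.
Local Open Scope complex_scope.
Local Open Scope ring_scope.

(* For s <> 0 the dilation is
     Ttilde_s(X) = (T_s(p X p) (+) 0) + omega(X) ((I - T_s(I)) (+) 1),
   where omega(X) = <X e, e> is the vector state of e = (0, 1).  The first summand is
   completely positive because T_s is.  For the second, a positive block matrix [X_ij]
   has a positive scalar corner [omega(X_ij)], and I - T_s(I) >= 0 since T_s(I) is a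
   positive contraction; the entrywise product of a positive scalar matrix with a
   positive operator is positive, as one sees by diagonalising the scalar matrix.
   Unitality is T_s(I) + (I - T_s(I)) = I, and the semigroup law follows from
   T_s(I - T_t(I)) = T_s(I) - T_(s+t)(I), which makes the defect terms telescope. *)

Section PsdScalarMatrix.
Variable C : numClosedFieldType.

(* [mxform c z w = <c z, w>], indexed as in [pos_opmx]. *)
Definition mxform n (c : 'I_n -> 'I_n -> C) (z w : 'I_n -> C) : C :=
  \sum_(i < n) \sum_(j < n) c i j * z j * (w i)^*.

Definition psd n (c : 'I_n -> 'I_n -> C) : Prop := forall z, 0 <= mxform c z z.

Lemma mxform_delta n (c : 'I_n -> 'I_n -> C) (i j : 'I_n) :
  mxform c (fun b => (b == j)%:R) (fun a => (a == i)%:R) = c i j.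
Proof.
rewrite /mxform (bigD1 i) //= [X in _ + X]big1 => [|a ai]; last first.
  by apply: big1 => b _; rewrite (negbTE ai) conjC0 mulr0.
rewrite addr0 (bigD1 j) //= [X in _ + X]big1 => [|b bj]; last first.
  by rewrite (negbTE bj) mulr0 mul0r.
by rewrite !eqxx conjC1 !mulr1 addr0.
Qed.

Lemma mxform_linl n (c : 'I_n -> 'I_n -> C) z z' w u :
  mxform c (fun b => z b + u * z' b) w = mxform c z w + u * mxform c z' w.
Proof.
rewrite /mxform mulr_sumr -big_split; apply: eq_bigr => a _.
rewrite mulr_sumr -big_split; apply: eq_bigr => b _ /=; ring.
Qed.

Lemma mxform_linr n (c : 'I_n -> 'I_n -> C) z w w' u :
  mxform c z (fun b => w b + u * w' b) = mxform c z w + u^* * mxform c z w'.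
Proof.
rewrite /mxform mulr_sumr -big_split; apply: eq_bigr => a _.
rewrite mulr_sumr -big_split; apply: eq_bigr => b _ /=.
rewrite rmorphD rmorphM; ring.
Qed.

(* Polarization with [u = 1] and [u = 'i]: if [u a + u^* b] is real for both, then
   [b = a^*]. *)
Lemma conj_eq_of_polar (a b : C) :
  (a + b)^* = a + b -> ('i * a - 'i * b)^* = 'i * a - 'i * b -> b = a^*.
Proof.
rewrite !rmorphD !rmorphN !rmorphM /= conjCi => Hre Him.
have Him' : b^* - a^* = a - b.
  apply: (mulfI (neq0Ci C)); rewrite mulrBr mulrBr -Him; ring.
have : (b - a^*) *+ 2 = 0.
  have -> : (b - a^*) *+ 2 = (a + b - (a^* + b^*)) + (b^* - a^* - (a - b)) by ring.
  by rewrite Hre Him' !subrr addr0.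
by move/eqP; rewrite mulrn_eq0 /= subr_eq0 => /eqP.
Qed.

Lemma psd_hermitian n (c : 'I_n -> 'I_n -> C) :
  psd c -> forall i j, c j i = (c i j)^*.
Proof.
move=> c_psd i j.
pose e k := fun b : 'I_n => (b == k)%:R : C.
have form_real z : (mxform c z z)^* = mxform c z z by rewrite geC0_conj.
have diag_real k : (c k k)^* = c k k by rewrite -(mxform_delta c k k); apply: form_real.
have polar u : (u * c i j + u^* * c j i)^* = u * c i j + u^* * c j i.
  have -> : u * c i j + u^* * c j i =
      mxform c (fun b => e i b + u * e j b) (fun b => e i b + u * e j b)
      - c i i - u * u^* * c j j.
    rewrite mxform_linl !mxform_linr !mxform_delta; ring.
  by rewrite !rmorphB rmorphM /= form_real !diag_real geC0_conj ?mul_conjC_ge0.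
apply: conj_eq_of_polar; first by have := polar 1; rewrite conjC1 !mul1r.
by have := polar 'i; rewrite conjCi mulNr.
Qed.

Lemma psd_spectral n (c : 'I_n -> 'I_n -> C) : psd c ->
  exists (d : 'I_n -> C) (P : 'M[C]_n), (forall k, 0 <= d k) /\
    (forall i j, c i j = \sum_(k < n) (P k i)^* * d k * P k j).
Proof.
move=> c_psd; pose M := \matrix_(i, j) c i j.
have M_herm : M \is hermsymmx.
  apply/is_hermitianmxP; rewrite expr0 scale1r; apply/matrixP => i j.
  by rewrite !mxE (psd_hermitian c_psd i j) conjCK.
have /orthomx_spectralP M_spec := hermitian_normalmx M_herm.
set P := spectralmx M in M_spec; set d := spectral_diag M in M_spec.
have P_unitary : P \is unitarymx by apply: spectral_unitarymx.
rewrite invmx_unitary // in M_spec.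
have cE i j : c i j = \sum_(k < n) (P k i)^* * d 0 k * P k j.
  have -> : c i j = M i j by rewrite mxE.
  by rewrite M_spec mul_mx_diag !mxE; apply: eq_bigr => k _; rewrite !mxE.
have P_orth k m : \sum_(a < n) P k a * (P m a)^* = (k == m)%:R.
  move/unitarymxP: P_unitary => /matrixP /(_ k m); rewrite !mxE => <-.
  by apply: eq_bigr => a _; rewrite !mxE.
exists (fun k => d 0 k), P; split=> [k|//].
have <- : mxform c (fun b => (P k b)^*) (fun b => (P k b)^*) = d 0 k; last exact: c_psd.
transitivity (\sum_(m < n) d 0 m * (\sum_(a < n) P k a * (P m a)^*) *
                            (\sum_(b < n) P m b * (P k b)^*)).
  rewrite /mxform; under eq_bigr do under eq_bigr do rewrite cE !mulr_suml.
  under eq_bigr do rewrite exchange_big; rewrite exchange_big /=.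
  apply: eq_bigr => m _; rewrite -mulrA big_distrlr /= mulr_sumr.
  apply: eq_bigr => a _; rewrite mulr_sumr; apply: eq_bigr => b _.
  rewrite conjCK; ring.
under eq_bigr do rewrite !P_orth.
rewrite (bigD1 k) //= eqxx !mulr1 big1 ?addr0 // => m /negbTE.
by rewrite eq_sym => ->; rewrite !mulr0.
Qed.

End PsdScalarMatrix.

Section Sesquilinear.
Variables (C : numClosedFieldType) (V : lmodType C) (q : V -> V -> C).
Hypothesis q_linl : forall a x y z, q (a *: x + y) z = a * q x z + q y z.
Hypothesis q_linr : forall a x y z, q x (a *: y + z) = a^* * q x y + q x z.

Lemma sesq0l z : q 0 z = 0.
Proof.
have := q_linl 1 0 0 z; rewrite scaler0 addr0 mul1r -{1}[q 0 z]addr0.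
by move/addrI/esym.
Qed.

Lemma sesq0r z : q z 0 = 0.
Proof.
have := q_linr 1 z 0 0; rewrite scaler0 addr0 conjC1 mul1r -{1}[q z 0]addr0.
by move/addrI/esym.
Qed.

Lemma sesqDl x y z : q (x + y) z = q x z + q y z.
Proof. by have := q_linl 1 x y z; rewrite scale1r mul1r. Qed.

Lemma sesqDr x y z : q z (x + y) = q z x + q z y.
Proof. by have := q_linr 1 z x y; rewrite scale1r conjC1 mul1r. Qed.

Lemma sesqZl a x z : q (a *: x) z = a * q x z.
Proof. by have := q_linl a x 0 z; rewrite !addr0 sesq0l addr0. Qed.

Lemma sesqZr a x z : q z (a *: x) = a^* * q z x.
Proof. by have := q_linr a z x 0; rewrite !addr0 sesq0r addr0. Qed.

Lemma sesqBl x y z : q (x - y) z = q x z - q y z.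
Proof. by rewrite sesqDl -scaleN1r sesqZl mulN1r. Qed.

Lemma sesqBr x y z : q z (x - y) = q z x - q z y.
Proof. by rewrite sesqDr -scaleN1r sesqZr conjCN1 mulN1r. Qed.

Lemma sesq_suml n (f : 'I_n -> V) z : q (\sum_(j < n) f j) z = \sum_(j < n) q (f j) z.
Proof. exact: (big_morph (q^~ z) (fun x y => sesqDl x y z) (sesq0l z)). Qed.

Lemma sesq_sumr n (f : 'I_n -> V) z : q z (\sum_(j < n) f j) = \sum_(j < n) q z (f j).
Proof. exact: (big_morph (q z) (fun x y => sesqDr x y z) (sesq0r z)). Qed.

Hypothesis q_ge0 : forall x, 0 <= q x x.

(* Schur's argument: writing [c = P^* diag(d) P] turns the sum into
   [\sum_k d_k q(w_k, w_k)] with [w_k = \sum_j P_kj y_j]. *)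
Lemma psd_sesq_sum_ge0 n (c : 'I_n -> 'I_n -> C) (y : 'I_n -> V) : psd c ->
  0 <= \sum_(i < n) \sum_(j < n) c i j * q (y j) (y i).
Proof.
move=> /psd_spectral [d [P [d_ge0 cE]]].
pose w k := \sum_(j < n) P k j *: y j.
have -> : \sum_(i < n) \sum_(j < n) c i j * q (y j) (y i) =
          \sum_(k < n) d k * q (w k) (w k).
  transitivity (\sum_(i < n) \sum_(j < n) \sum_(k < n)
                 d k * ((P k i)^* * (P k j * q (y j) (y i)))).
    apply: eq_bigr => i _; apply: eq_bigr => j _; rewrite cE mulr_suml.
    by apply: eq_bigr => k _ /=; ring.
  under eq_bigr do rewrite exchange_big; rewrite exchange_big /=.
  apply: eq_bigr => k _; rewrite sesq_sumr mulr_sumr; apply: eq_bigr => i _.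
  rewrite sesqZr sesq_suml !mulr_sumr; apply: eq_bigr => j _.
  by rewrite sesqZl.
by apply: sumr_ge0 => k _; apply: mulr_ge0.
Qed.

End Sesquilinear.

Section InnerProductSpace.
Variables (R : realType) (V : lmodType R[i]) (ip : V -> V -> R[i]).
Hypothesis ip_inner : is_inner_product ip.

Lemma ip_linl a x y z : ip (a *: x + y) z = a * ip x z + ip y z.
Proof. by case: ip_inner. Qed.

Lemma ip_conj x y : ip y x = (ip x y)^*.
Proof. by case: ip_inner. Qed.

Lemma ip_ge0 x : 0 <= ip x x.
Proof. by case: ip_inner. Qed.

Lemma ip_linr a x y z : ip x (a *: y + z) = a^* * ip x y + ip x z.
Proof. by rewrite ip_conj ip_linl rmorphD rmorphM /= -!ip_conj. Qed.

Lemma ip_real x : ip x x = (complex.Re (ip x x))%:C.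
Proof. by rewrite RRe_real // ger0_real // ip_ge0. Qed.

Lemma ipDD_le x y : ip (x + y) (x + y) <= 2%:R * ip x x + 2%:R * ip y y.
Proof.
have <- : ip (x + y) (x + y) + ip (x - y) (x - y) = 2%:R * ip x x + 2%:R * ip y y.
  rewrite !(sesqBl ip_linl, sesqBr ip_linr, sesqDl ip_linl, sesqDr ip_linr); ring.
by rewrite lerDl ip_ge0.
Qed.

(* Bounds on [<F x, F x>] avoid the square roots in [vnorm]. *)
Definition normsq_bounded_by (F : V -> V) (k : R[i]) : Prop :=
  0 <= k /\ forall x, ip (F x) (F x) <= k * ip x x.

Lemma op_bounded_by_normsq F M : op_bounded_by ip F M -> normsq_bounded_by F (M ^+ 2)%:C.
Proof.
move=> FM; split=> [|x]; first by rewrite lecR sqr_ge0.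
rewrite (ip_real (F x)) (ip_real x) -rmorphM /= lecR.
have := FM x; rewrite /vnorm => le_norm.
have sqrt_ge0 : 0 <= Num.sqrt (complex.Re (ip (F x) (F x))) by apply: sqrtr_ge0.
have Re_ge0 y : 0 <= complex.Re (ip y y) by rewrite -lecR -ip_real ip_ge0.
have := ler_pM sqrt_ge0 sqrt_ge0 le_norm le_norm.
by rewrite -expr2 sqr_sqrtr // mulrACA -!expr2 sqr_sqrtr.
Qed.

Lemma normsq_bounded_by_op F k :
  normsq_bounded_by F k -> op_bounded_by ip F (Num.sqrt (complex.Re k)).
Proof.
move=> [k_ge0 Fk] x; rewrite /vnorm.
have kE : k = (complex.Re k)%:C by rewrite RRe_real // ger0_real.
have Re_ge0 : 0 <= complex.Re k by rewrite -lecR -kE.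
rewrite -sqrtrM // ler_sqrt; last by rewrite mulr_ge0 // -lecR -ip_real ip_ge0.
by rewrite -lecR rmorphM /= -kE -!ip_real Fk.
Qed.

Lemma bop_linear F : is_bop ip F -> forall a x y, F (a *: x + y) = a *: F x + F y.
Proof. by case. Qed.

Lemma bop_normsq F : is_bop ip F -> exists k, normsq_bounded_by F k.
Proof. by move=> [_ [M FM]]; exists (M ^+ 2)%:C; apply: op_bounded_by_normsq. Qed.

Lemma normsq_bop F k : (forall a x y, F (a *: x + y) = a *: F x + F y) ->
  normsq_bounded_by F k -> is_bop ip F.
Proof.
move=> F_lin Fk; split=> //.
by exists (Num.sqrt (complex.Re k)); apply: normsq_bounded_by_op.
Qed.

Lemma bop0 F : is_bop ip F -> F 0 = 0.
Proof.
move=> /bop_linear /(_ 1 0 0); rewrite scaler0 addr0 scale1r -{1}[F 0]addr0.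
by move/addrI/esym.
Qed.

Lemma bop_id : is_bop ip id.
Proof. by apply: (@normsq_bop _ 1) => //; split=> // x; rewrite mul1r. Qed.

Lemma bop_zero : is_bop ip (fun _ => 0).
Proof.
apply: (@normsq_bop _ 0) => [a x y|]; first by rewrite scaler0 addr0.
by split=> // x; rewrite (sesq0l ip_linl) mul0r.
Qed.

Lemma bop_comb a F G : is_bop ip F -> is_bop ip G -> is_bop ip (fun x => a *: F x + G x).
Proof.
move=> F_bop G_bop.
have [kF [kF_ge0 Fk]] := bop_normsq F_bop; have [kG [kG_ge0 Gk]] := bop_normsq G_bop.
have aa_ge0 : 0 <= a * a^* by apply: mul_conjC_ge0.
apply: (@normsq_bop _ (2%:R * (a * a^* * kF) + 2%:R * kG)).
  move=> b x y; rewrite (bop_linear F_bop) (bop_linear G_bop) !scalerDr !scalerA.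
  by rewrite [a * b]mulrC addrACA.
split=> [|x]; first by apply: addr_ge0; apply: mulr_ge0 => //; apply: mulr_ge0.
apply: le_trans (ipDD_le _ _) _.
rewrite (sesqZl ip_linl) (sesqZr ip_linr) [a * (_ * _)]mulrA.
rewrite [leRHS](_ : _ = 2%:R * (a * a^* * (kF * ip x x)) + 2%:R * (kG * ip x x));
  last by ring.
by apply: lerD; apply: ler_wpM2l => //; rewrite ?ler_wpM2l ?Fk ?Gk.
Qed.

Lemma bop_ext F G : is_bop ip F -> F =1 G -> is_bop ip G.
Proof. by move=> + /funext <-. Qed.

Lemma bop_scale a F : is_bop ip F -> is_bop ip (fun x => a *: F x).
Proof. by move=> F_bop; apply: bop_ext (bop_comb a F_bop bop_zero) _ => x; rewrite addr0. Qed.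

Lemma bop_sub F G : is_bop ip F -> is_bop ip G -> is_bop ip (fun x => F x - G x).
Proof.
move=> F_bop G_bop; apply: bop_ext (bop_comb (-1) G_bop F_bop) _ => x.
by rewrite scaleN1r addrC.
Qed.

Lemma bop_affine A B c : is_bop ip A -> is_bop ip B ->
  is_bop ip (fun x => A x + c *: (x - B x)).
Proof.
move=> A_bop B_bop; have := bop_comb c (bop_sub bop_id B_bop) A_bop.
by move/bop_ext; apply=> x; rewrite addrC.
Qed.

Lemma bop_map_zero Phi : bop_map ip Phi -> Phi (fun _ => 0) = fun _ => 0.
Proof.
move=> [_ Phi_lin]; have := Phi_lin (-1) _ _ bop_zero bop_zero.
have -> : (fun _ : V => (-1) *: (0 : V) + 0) = (fun _ => 0).
  by apply: funext => x; rewrite scaler0 addr0.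
by move=> ->; apply: funext => x; rewrite scaleN1r addNr.
Qed.

Lemma bop_map_scale Phi a B : bop_map ip Phi -> is_bop ip B ->
  Phi (fun x => a *: B x) = fun x => a *: Phi B x.
Proof.
move=> Phi_map B_bop; have := Phi_map.2 a _ _ B_bop bop_zero.
rewrite (bop_map_zero Phi_map).
have -> : (fun x => a *: B x + 0) = (fun x => a *: B x).
  by apply: funext => x; rewrite addr0.
by move=> ->; apply: funext => x; rewrite addr0.
Qed.

Lemma bop_map_affine Phi A B c : bop_map ip Phi -> is_bop ip A -> is_bop ip B ->
  Phi (fun x => A x + c *: (x - B x)) = fun x => Phi A x + c *: (Phi id x - Phi B x).
Proof.
move=> Phi_map A_bop B_bop.
have cB_bop := bop_scale (- c) B_bop.
have -> : (fun x => A x + c *: (x - B x)) =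
          (fun x => 1 *: A x + (fun y => c *: id y + (- c) *: B y) x).
  by apply: funext => x; rewrite scale1r scalerBr scaleNr.
rewrite (Phi_map.2 _ _ _ A_bop (bop_comb c bop_id cB_bop)).
rewrite (Phi_map.2 _ _ _ bop_id cB_bop) bop_map_scale //; apply: funext => x.
by rewrite scale1r scalerBr scaleNr.
Qed.

(* [2 <v - P v, v> = |v - P v|^2 + (|v|^2 - |P v|^2)] once [<P v, v>] is real. *)
Lemma pos_contraction_le_id P v : 0 <= ip (P v) v -> ip (P v) (P v) <= ip v v ->
  0 <= ip (v - P v) v.
Proof.
set w := P v; set r := ip w v => r_ge0 le_w.
have rC : ip v w = r by rewrite /r ip_conj geC0_conj.
have : 0 <= (ip v v - r) *+ 2.
  apply: le_trans (ip_ge0 (v - w)) _.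
  rewrite (sesqBl ip_linl) !(sesqBr ip_linr) rC -/r.
  have -> : ip v v - r - (r - ip w w) = (ip v v - r) *+ 2 - (ip v v - ip w w) by ring.
  by rewrite gerBl subr_ge0.
by rewrite pmulrn_lge0 // (sesqBl ip_linl).
Qed.

Lemma cp_id_ge0 Phi v : completely_positive ip Phi -> 0 <= ip (Phi id v) v.
Proof.
have id_pos : pos_opmx ip (fun _ _ : 'I_1 => @id V).
  by move=> y; rewrite !big_ord1; apply: ip_ge0.
case=> _ /(_ 1 _ (fun _ _ => bop_id) id_pos (fun _ => v)).
by rewrite !big_ord1.
Qed.

Lemma contractive_id_le Phi v : contractive ip Phi -> ip (Phi id v) (Phi id v) <= ip v v.
Proof.
move=> Phi_contr; have : op_bounded_by ip (Phi id) 1.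
  by apply: Phi_contr bop_id _ _ => // x; rewrite mul1r.
by move/op_bounded_by_normsq => [_ /(_ v)]; rewrite expr1n mul1r.
Qed.

End InnerProductSpace.

Section DirectSumC.
Variables (R : realType) (V : lmodType R[i]) (ip : V -> V -> R[i]).
Hypothesis ip_inner : is_inner_product ip.
Local Notation C := R[i].
Local Notation ips := (ip_sumC ip).

Lemma ip_sumC_inner : is_inner_product ips.
Proof.
split.
- move=> a x y z; rewrite /ip_sumC /= (ip_linl ip_inner).
  change (a *: x.2) with (a * (x.2 : C)); ring.
- move=> x y; rewrite /ip_sumC rmorphD rmorphM /= -(ip_conj ip_inner) conjCK; ring.
- by move=> x; rewrite addr_ge0 ?mul_conjC_ge0 ?(ip_ge0 ip_inner).
have [_ _ _ ip_eq0] := ip_inner.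
case=> x1 x2; rewrite /ip_sumC /= => /eqP.
rewrite paddr_eq0 ?mul_conjC_ge0 ?(ip_ge0 ip_inner) // mul_conjC_eq0.
by case/andP => /eqP/ip_eq0 -> /eqP ->.
Qed.

Lemma ip_sumC_r0 w y : ips w (y, 0) = ip w.1 y.
Proof. by rewrite /ip_sumC /= rmorph0 mulr0 addr0. Qed.

Lemma compress_bop X : is_bop ips X -> is_bop ip (compress X).
Proof.
move=> X_bop; have [k [k_ge0 Xk]] := bop_normsq ip_sumC_inner X_bop.
apply: (normsq_bop ip_inner (k := k)) => [a x y|].
  rewrite /compress (_ : (a *: x + y, 0) = a *: (x, 0 : C^o) + (y, 0)).
    by rewrite (bop_linear X_bop).
  by congr pair; rewrite /= scaler0 addr0.
split=> // x; have := Xk (x, 0); rewrite ip_sumC_r0; apply: le_trans.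
by rewrite /ip_sumC lerDl mul_conjC_ge0.
Qed.

Lemma diag_bop F (c : C) : is_bop ip F ->
  is_bop ips (fun w : sumC V => (F w.1, (c * w.2 : C^o))).
Proof.
move=> F_bop; have [k [k_ge0 Fk]] := bop_normsq ip_inner F_bop.
have cc_ge0 : 0 <= c * c^* by apply: mul_conjC_ge0.
apply: (normsq_bop ip_sumC_inner (k := k + c * c^*)) => [a w z|].
  congr pair; rewrite /= ?(bop_linear F_bop) //.
  by change (c * (a * w.2 + z.2) = a * (c * w.2) + c * z.2); ring.
split=> [|w]; first exact: addr_ge0.
have w1_ge0 := ip_ge0 ip_inner w.1; have w2_ge0 : 0 <= w.2 * w.2^* by apply: mul_conjC_ge0.
rewrite /ip_sumC /= mulrDl !mulrDr; apply: lerD.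
  by apply: le_trans (Fk _) _; rewrite lerDl mulr_ge0.
by rewrite rmorphM mulrACA lerDr mulr_ge0.
Qed.

Lemma corner_scale X (z : C) : is_bop ips X -> (X (0, z : C^o)).2 = z * (X (0, 1)).2.
Proof.
move=> X_bop; have -> : (0, z : C^o) = z *: (0, 1 : C^o) + 0 :> sumC V.
  by rewrite addr0; congr pair; rewrite /= ?scaler0 // [RHS]mulr1.
by rewrite (bop_linear X_bop) (bop0 X_bop) addr0.
Qed.

Lemma pos_opmx_compress n (X : 'I_n -> 'I_n -> sumC V -> sumC V) :
  pos_opmx ips X -> pos_opmx ip (fun i j => compress (X i j)).
Proof.
move=> X_pos y; have := X_pos (fun i => (y i, 0 : C^o)).
by under eq_bigr do under eq_bigr do rewrite ip_sumC_r0.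
Qed.

Lemma psd_corner n (X : 'I_n -> 'I_n -> sumC V -> sumC V) :
  (forall i j, is_bop ips (X i j)) -> pos_opmx ips X ->
  psd (fun i j => (X i j (0, 1)).2).
Proof.
move=> X_bop X_pos z; have := X_pos (fun i => (0, z i : C^o)); rewrite /mxform.
congr (0 <= _); apply: eq_bigr => i _; apply: eq_bigr => j _.
by rewrite /ip_sumC /= (sesq0r (ip_linr ip_inner)) add0r corner_scale // [z j * _]mulrC.
Qed.

End DirectSumC.

Section Dilation.
Variables (R : realType) (V : lmodType R[i]) (ip : V -> V -> R[i]).
Hypothesis ip_inner : is_inner_product ip.
Local Notation C := R[i].
Local Notation ips := (ip_sumC ip).
Variables (S : nmodType) (T : S -> (V -> V) -> (V -> V)).
Hypothesis T_contractive : forall s, contractive ip (T s).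
Hypothesis T_cp : forall s, completely_positive ip (T s).
Local Notation TT := (Ttilde T).

Lemma Ttilde0 X : TT 0 X = X.
Proof. by rewrite /Ttilde eqxx. Qed.

Lemma TtildeE s X : s != 0 -> TT s X =
  fun w => (T s (compress X) w.1 + (X (0, 1)).2 *: (w.1 - T s id w.1),
            ((X (0, 1)).2 * w.2 : C^o)).
Proof. by move=> s_neq0; rewrite /Ttilde (negbTE s_neq0). Qed.

Lemma Ttilde_corner s X : (TT s X (0, 1)).2 = (X (0, 1)).2.
Proof.
have [->|s_neq0] := eqVneq s 0; first by rewrite Ttilde0.
by rewrite TtildeE //=; apply: mulr1.
Qed.

Lemma compress_TtildeE s X : s != 0 ->
  compress (TT s X) = fun x => T s (compress X) x + (X (0, 1)).2 *: (x - T s id x).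
Proof. by move=> s_neq0; rewrite TtildeE. Qed.

Lemma T_bop s A : is_bop ip A -> is_bop ip (T s A).
Proof. by have [[T_bop _] _] := T_cp s; apply: T_bop. Qed.

Lemma Ttilde_bop s X : is_bop ips X -> is_bop ips (TT s X).
Proof.
move=> X_bop; have [->|s_neq0] := eqVneq s 0; first by rewrite Ttilde0.
rewrite TtildeE //.
apply: (diag_bop ip_inner (F := fun x => T s (compress X) x + _ *: (x - T s id x))).
apply: (bop_affine ip_inner).
  exact/T_bop/(compress_bop ip_inner).
exact/T_bop/(bop_id ip_inner).
Qed.

Lemma Ttilde_linear s a X Y : is_bop ips X -> is_bop ips Y ->
  TT s (fun w => a *: X w + Y w) = fun w => a *: TT s X w + TT s Y w.
Proof.
move=> X_bop Y_bop; have [->|s_neq0] := eqVneq s 0; first by rewrite !Ttilde0.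
have [_ T_lin] := (T_cp s).1.
rewrite !TtildeE //=; apply: funext => w; congr pair => /=.
  rewrite (T_lin _ _ _ (compress_bop ip_inner X_bop) (compress_bop ip_inner Y_bop)).
  rewrite -[a *: (X (0, 1)).2]/(a * (X (0, 1)).2).
  by rewrite scalerDl -scalerA [in RHS]scalerDr addrACA.
by change ((a * (X (0, 1)).2 + (Y (0, 1)).2) * w.2 =
           a * ((X (0, 1)).2 * w.2) + (Y (0, 1)).2 * w.2); ring.
Qed.

Lemma Ttilde_pos s n (X : 'I_n -> 'I_n -> sumC V -> sumC V) : s != 0 ->
  (forall i j, is_bop ips (X i j)) -> pos_opmx ips X ->
  pos_opmx ips (fun i j => TT s (X i j)).
Proof.
move=> s_neq0 X_bop X_pos x.
pose c i j := (X i j (0, 1)).2.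
pose D y := y - T s id y.
have D_bop : is_bop ip D.
  exact: (bop_sub ip_inner) (bop_id ip_inner) (T_bop _ (bop_id ip_inner)).
have termsE i j : ips (TT s (X i j) (x j)) (x i) =
    ip (T s (compress (X i j)) (x j).1) (x i).1 + c i j * ip (D (x j).1) (x i).1
    + c i j * (x j).2 * (x i).2^*.
  rewrite TtildeE // /ip_sumC /= (sesqDl (ip_linl ip_inner)).
  by rewrite (sesqZl (ip_linl ip_inner)) -mulrA.
under eq_bigr do under eq_bigr do rewrite termsE.
under eq_bigr do rewrite !big_split; rewrite !big_split /=.
rewrite !addr_ge0 //.
- have compress_bops i j := compress_bop ip_inner (X_bop i j).
  exact: (T_cp s).2 _ _ compress_bops (pos_opmx_compress X_pos) (fun i => (x i).1).
- have D_linl a y1 y2 z : ip (D (a *: y1 + y2)) z = a * ip (D y1) z + ip (D y2) z.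
    by rewrite (bop_linear D_bop) (ip_linl ip_inner).
  have D_pos y : 0 <= ip (D y) y.
    apply: (pos_contraction_le_id ip_inner (P := T s id)).
      exact: (cp_id_ge0 ip_inner).
    exact: (contractive_id_le ip_inner).
  exact: (psd_sesq_sum_ge0 D_linl (fun a y => ip_linr ip_inner a (D y)) D_pos
    (fun i => (x i).1) (psd_corner ip_inner X_bop X_pos)).
- exact: (psd_corner ip_inner X_bop X_pos (fun i => (x i).2)).
Qed.

Lemma Ttilde_cp s : completely_positive ips (TT s).
Proof.
split; first by split; [apply: Ttilde_bop | apply: Ttilde_linear].
move=> n X X_bop X_pos; have [->|s_neq0] := eqVneq s 0; last exact: Ttilde_pos.
by under eq_fun do under eq_fun do rewrite Ttilde0.
Qed.

Lemma Ttilde_unital s : unital (TT s).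
Proof.
rewrite /unital; have [->|s_neq0] := eqVneq s 0; first exact: Ttilde0.
rewrite TtildeE //; apply: funext => -[w1 w2] /=.
by congr pair; rewrite ?scale1r ?subrKC ?mul1r.
Qed.

Hypothesis T0 : forall A, is_bop ip A -> T 0 A = A.
Hypothesis TD : forall s t A, is_bop ip A -> T (s + t) A = T s (T t A).

(* [Ttilde (s + t)] is the identity when [s + t = 0]; hence the need for [S] to have no
   nontrivial decompositions of [0]. *)
Hypothesis sum_eq0 : forall s t : S, s + t = 0 -> s = 0.

Lemma TtildeD s t X : is_bop ips X -> TT (s + t) X = TT s (TT t X).
Proof.
move=> X_bop.
have [->|s_neq0] := eqVneq s 0; first by rewrite add0r Ttilde0.
have [->|t_neq0] := eqVneq t 0; first by rewrite addr0 Ttilde0.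
have st_neq0 : s + t != 0 by apply: contra_neq s_neq0; apply: sum_eq0.
have A_bop := compress_bop ip_inner X_bop.
rewrite (TtildeE _ st_neq0) (TtildeE _ s_neq0) Ttilde_corner compress_TtildeE //.
rewrite (bop_map_affine ip_inner _ (T_cp s).1 (T_bop _ A_bop) (T_bop _ (bop_id ip_inner))).
apply: funext => w; congr pair => /=.
rewrite (TD _ _ A_bop) (TD _ _ (bop_id ip_inner)) -addrA -scalerDr.
by rewrite [_ - _ + _]addrC subrKA.
Qed.

Lemma compress_Ttilde s b : is_bop ip b -> T s b = compress (TT s (fun w => (b w.1, 0))).
Proof.
move=> b_bop; have [->|s_neq0] := eqVneq s 0; first by rewrite Ttilde0 T0.
by rewrite TtildeE //; apply: funext => x; rewrite /compress /= scale0r addr0.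
Qed.

End Dilation.

Theorem proposition2p1 (R : realType) (V : lmodType R[i]) (ip : V -> V -> R[i])
  (S : nmodType) (T : S -> (V -> V) -> (V -> V)) :
  is_hilbert ip ->
  (forall s t : S, s + t = 0 -> s = 0) ->
  cp_semigroup ip T ->
  [/\ (forall s : S, completely_positive (ip_sumC ip) (Ttilde T s)
                     /\ unital (Ttilde T s)),
      Ttilde T 0 = id,
      (forall (s t : S) (X : sumC V -> sumC V), is_bop (ip_sumC ip) X ->
         Ttilde T (s + t) X = Ttilde T s (Ttilde T t X)) &
      (forall (s : S) (b : V -> V), is_bop ip b ->
         T s b = compress (Ttilde T s (fun w : sumC V => (b w.1, 0 : (R[i])^o))))].
Proof.
move=> [ip_inner _] sum_eq0 [_ T_contractive T_cp T0 TD]; split.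
- by move=> s; split; [apply: Ttilde_cp | apply: Ttilde_unital].
- by apply: funext => X; apply: Ttilde0.
- by move=> s t X; apply: TtildeD.
- by move=> s b; apply: compress_Ttilde.
Qed.
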